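(* Let $k, m, s$ be positive integers with $m \geq 2$ and $s \leq k-2$, let $n = km$, let $B_1,\ldots,B_m$ be a partition of $[n]$ into blocks with $|B_i| = k$, choose $T_i \subset B_i$ with $|T_i| = s$ for each $i$, put $T = \bigcup_{i=1}^m T_i$, and let $\mathcal{F}$ be the union-closed family generated by $\{B_i \cup \{t\} : i \in [m],\ t \in T\}$. Then every member of $\mathcal{F}$ contains at least one block, and for each $j \in [m]$ the number $N_j$ of members of $\mathcal{F}$ containing exactly $j$ of the blocks $B_1,\ldots,B_m$ is $N_j = \binom{m}{j} 2^{(m-j)s}$; consequently $$|\mathcal{F}| = 2^{(m-1)s}\sum_{j=1}^m \binom{m}{j} 2^{-(j-1)s}.$$
   Context: $[n] = \{1,\ldots,n\}$. A family of sets is union-closed if it contains the union of any two of its members. The union-closed family generated by $\mathcal{G} \subset \mathcal{P}(X)$ is the smallest union-closed family of subsets of $X$ containing $\mathcal{G}$. *)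

From mathcomp Require Import all_boot all_order all_algebra.
Set Implicit Arguments. Unset Strict Implicit. Unset Printing Implicit Defensive.

Definition union_closed (T : finType) (F : {set {set T}}) : bool :=
  [forall A in F, forall B in F, (A :|: B) \in F].

Definition uc_generated (T : finType) (G : {set {set T}}) : {set {set T}} :=
  \bigcap_(F : {set {set T}} | union_closed F && (G \subset F)) F.

From mathcomp Require Import all_boot all_order all_algebra.
From mathcomp Require Import zify ring.
Import GRing.Theory Num.Theory.

Set Implicit Arguments.
Unset Strict Implicit.

(* The family F generated by the sets B_i ∪ {t} (t ∈ T = ⋃ T_i) is described
   explicitly: X ∈ F iff X contains some block and every point of X outside
   T lies in a block contained in X ("admissible" sets).  One inclusion holds
   because admissible sets form a union-closed family containing the
   generators; the other because an admissible X is the (nonempty) union of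
   the generators it contains.
   An admissible X whose set of contained blocks is I ≠ ∅ is then exactly
   ⋃_{i∈I} B_i ∪ S with S an arbitrary subset of ⋃_{i∉I} T_i, a set of size
   (m - |I|) s.  Hence there are 2^((m-|I|)s) such X, and summing over the
   'C(m, j) sets I of size j gives N_j; summing over j ≥ 1 (no member of F
   contains zero blocks) gives |F|, whose closed form is a rational
   rearrangement of the exponents. *)

Lemma card_bigcup_disjoint (I T : finType) (A : {set I}) (F : I -> {set T}) :
  (forall i j, i != j -> [disjoint F i & F j]) ->
  #|\bigcup_(i in A) F i| = \sum_(i in A) #|F i|.
Proof.
move=> disF; have [n] := ubnP #|A|; elim: n A => // n IH A leA.
have [->|[a aA]] := set_0Vmem A; first by rewrite !big_set0 cards0.
rewrite -(setD1K aA) !big_setU1 ?setD11 //=.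
have dj : [disjoint F a & \bigcup_(i in A :\ a) F i].
  apply/bigcup_disjointP => i; rewrite !inE => /andP[ia _].
  by apply: disF; rewrite eq_sym.
rewrite cardsU (disjoint_setI0 dj) cards0 subn0 IH //.
by rewrite (cardsD1 a A) aA in leA.
Qed.

Lemma bigcup_mem_union_closed (T : finType) (F Ys : {set {set T}}) :
  union_closed F -> Ys \subset F -> \bigcup_(Y in Ys) Y != set0 ->
  \bigcup_(Y in Ys) Y \in F.
Proof.
move=> /forallP ucF YsF; apply: contraNT => notF.
suff: (\bigcup_(Y in Ys) Y == set0) || (\bigcup_(Y in Ys) Y \in F).
  by rewrite (negbTE notF) orbF.
apply: (big_ind (fun Z => (Z == set0) || (Z \in F))) => [|X Y|Y /(subsetP YsF) ->].
- by rewrite eqxx.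
- case/orP=> [/eqP->|XF]; first by rewrite set0U.
  case/orP=> [/eqP->|YF]; first by rewrite setU0 XF orbT.
  by have /forall_inP/(_ Y YF) -> := implyP (ucF X) XF; rewrite orbT.
- by rewrite orbT.
Qed.

Lemma uc_generated_min (T : finType) (G F : {set {set T}}) :
  union_closed F -> G \subset F -> uc_generated G \subset F.
Proof. by move=> ucF GF; apply: bigcap_inf; rewrite ucF GF. Qed.

(* A nonempty set each of whose points lies in a generator contained in it
   is a union of generators, hence belongs to the generated family. *)
Lemma mem_uc_generated (T : finType) (G : {set {set T}}) (X : {set T}) :
  X != set0 ->
  (forall x, x \in X -> exists2 Y, Y \in G & (x \in Y) && (Y \subset X)) ->
  X \in uc_generated G.
Proof.
move=> X0 coverX; set Ys := [set Y in G | Y \subset X].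
have XE : \bigcup_(Y in Ys) Y = X.
  apply/eqP; rewrite eqEsubset; apply/andP; split.
    by apply/bigcupsP => Y; rewrite inE => /andP[_].
  apply/subsetP => x /coverX[Y YG /andP[xY YX]].
  by apply/bigcupP; exists Y; rewrite // inE YG.
apply/bigcapP => F /andP[ucF GF]; rewrite -XE.
apply: bigcup_mem_union_closed; rewrite ?XE //.
by apply/subsetP => Y; rewrite inE => /andP[/(subsetP GF)].
Qed.

Section BlockFamily.

Variables (k m s : nat) (B T : 'I_m -> {set 'I_(k * m)}).
Hypothesis hBcard : forall i, #|B i| = k.
Hypothesis hBdisj : forall i j, i != j -> [disjoint B i & B j].
Hypothesis hTsub : forall i, T i \subset B i.
Hypothesis hTcard : forall i, #|T i| = s.
Hypothesis hs0 : 0 < s.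
Hypothesis hsk : s < k.

Let Tall := \bigcup_(i < m) T i.
Let gens := [set B i :|: [set t] | i in [set: 'I_m], t in Tall].

Let blocks_of (X : {set 'I_(k * m)}) : {set 'I_m} := [set i | B i \subset X].
Let covered (X : {set 'I_(k * m)}) := \bigcup_(i | B i \subset X) B i.

Let admissible (X : {set 'I_(k * m)}) : bool :=
  [exists i, B i \subset X] && (X \subset covered X :|: Tall).

Lemma mem_block_inj {i j x} : x \in B i -> x \in B j -> i = j.
Proof.
move=> xi xj; apply/eqP; apply: contraT => ij.
by move: (disjointFr (hBdisj ij) xi); rewrite xj.
Qed.

Lemma mem_T_block {i x} : x \in T i -> x \in B i.
Proof. exact/subsetP. Qed.

Lemma mem_Tall_block {i x} : x \in Tall -> x \in B i -> x \in T i.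
Proof.
case/bigcupP => j _ xj xi.
by rewrite (mem_block_inj xi (mem_T_block xj)).
Qed.

Lemma T_neq0 (i : 'I_m) : exists t, t \in T i.
Proof. by apply/card_gt0P; rewrite hTcard. Qed.

(* Since s < k no block is covered by T; this pins down the blocks of X. *)
Lemma block_not_sub_Tall (i : 'I_m) : ~~ (B i \subset Tall).
Proof.
apply/negP => BT.
have : B i \subset T i.
  by apply/subsetP => x xi; apply: mem_Tall_block (subsetP BT x xi) xi.
by move/subset_leq_card; rewrite hBcard hTcard leqNgt hsk.
Qed.

Lemma covered_mono (X Y : {set 'I_(k * m)}) :
  X \subset Y -> covered X \subset covered Y.
Proof.
by move=> XY; apply/bigcupsP => i BiX; apply: bigcup_sup; apply: subset_trans XY.
Qed.

(* Admissibility survives unions, because covered is monotone. *)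
Lemma admissible_union_closed : union_closed [set X | admissible X].
Proof.
apply/forall_inP => X; rewrite inE => /andP[/existsP[i BiX] XP].
apply/forall_inP => Y; rewrite inE => /andP[_ YP]; rewrite inE.
apply/andP; split; first by apply/existsP; exists i; rewrite subsetU ?BiX.
rewrite subUset; apply/andP; split.
  by apply: (subset_trans XP); rewrite setSU ?covered_mono ?subsetUl.
by apply: (subset_trans YP); rewrite setSU ?covered_mono ?subsetUr.
Qed.

Lemma gens_admissible : gens \subset [set X | admissible X].
Proof.
apply/subsetP => _ /imset2P[i t _ tT ->]; rewrite inE.
apply/andP; split; first by apply/existsP; exists i; rewrite subsetUl.
rewrite subUset sub1set !inE tT orbT andbT.
by apply: subsetU; apply/orP; left; apply: bigcup_sup; rewrite subsetUl.
Qed.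

(* An admissible set is the union of the generators B_i ∪ {t} it contains. *)
Lemma admissible_generated (X : {set 'I_(k * m)}) :
  admissible X -> X \in uc_generated gens.
Proof.
case/andP => /existsP[i0 Bi0X] XP.
have [x0 x0i0] : exists x, x \in B i0.
  by apply/card_gt0P; rewrite hBcard; apply: leq_ltn_trans hsk.
apply: mem_uc_generated; first by apply/set0Pn; exists x0; apply: (subsetP Bi0X).
move=> x xX; have := subsetP XP x xX; rewrite inE; case/orP.
- case/bigcupP => i BiX xi; have [t ti] := T_neq0 i.
  exists (B i :|: [set t]).
    by apply/imset2P; exists i t => //; apply/bigcupP; exists i.
  by rewrite inE xi subUset BiX sub1set (subsetP BiX) ?mem_T_block.
- move=> xT; exists (B i0 :|: [set x]); first by apply/imset2P; exists i0 x.
  by rewrite !inE eqxx orbT subUset Bi0X sub1set.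
Qed.

Lemma uc_generatedE : uc_generated gens = [set X | admissible X].
Proof.
apply/eqP; rewrite eqEsubset uc_generated_min ?admissible_union_closed
  ?gens_admissible //=.
by apply/subsetP => X; rewrite inE; apply: admissible_generated.
Qed.

Lemma member_contains_block (X : {set 'I_(k * m)}) :
  X \in uc_generated gens -> exists i, B i \subset X.
Proof. by rewrite uc_generatedE inE => /andP[/existsP[i BiX] _]; exists i. Qed.

(* For a set of block indices I: the union of those blocks, and the free part
   ⋃_{i ∉ I} T_i which an admissible set with blocks I may meet freely. *)
Let blocks_union (I : {set 'I_m}) := \bigcup_(i in I) B i.
Let free_part (I : {set 'I_m}) := \bigcup_(i in ~: I) T i.

Lemma free_part_Tall (I : {set 'I_m}) : free_part I \subset Tall.
Proof. by apply/bigcupsP => i _; apply: (bigcup_sup i). Qed.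

Lemma blocks_free_disjoint (I : {set 'I_m}) :
  [disjoint blocks_union I & free_part I].
Proof.
apply/bigcup_disjointP => j; rewrite inE => jI.
rewrite disjoint_sym; apply/bigcup_disjointP => i iI.
apply: disjointWl (hTsub j) _; apply: hBdisj.
by apply: contraNneq jI => ->.
Qed.

(* Adding free points to the blocks of I creates no new block, since no
   block is covered by T. *)
Lemma blocks_of_extend (I : {set 'I_m}) (S : {set 'I_(k * m)}) :
  S \subset free_part I -> blocks_of (blocks_union I :|: S) = I.
Proof.
move=> SF; apply/setP => i; rewrite inE; apply/idP/idP; last first.
  by move=> iI; apply: subsetU; apply/orP; left; apply: bigcup_sup.
move=> BiX; apply: contraT => iI; rewrite -(negbTE (block_not_sub_Tall i)).
apply/subsetP => x xi; move: (subsetP BiX x xi); rewrite inE; case/orP.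
  by case/bigcupP => j jI xj; rewrite (mem_block_inj xi xj) jI in iI.
by move=> /(subsetP SF) /(subsetP (free_part_Tall I)).
Qed.

Lemma admissible_extend (I : {set 'I_m}) (S : {set 'I_(k * m)}) :
  I != set0 -> S \subset free_part I -> admissible (blocks_union I :|: S).
Proof.
move=> I0 SF; have [i0 i0I] := set0Pn _ I0.
have BIcov : blocks_union I \subset covered (blocks_union I :|: S).
  apply/bigcupsP => i iI; apply: bigcup_sup.
  by apply: subsetU; apply/orP; left; apply: bigcup_sup.
apply/andP; split.
  by apply/existsP; exists i0; apply: subsetU; apply/orP; left; apply: bigcup_sup.
by apply: setUSS BIcov (subset_trans SF (free_part_Tall I)).
Qed.

Lemma admissible_decompose (X : {set 'I_(k * m)}) : admissible X ->
  X = blocks_union (blocks_of X) :|: (X :&: free_part (blocks_of X)).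
Proof.
case/andP => _ XP; apply/setP => x; rewrite !inE.
apply/idP/idP => [xX|]; last first.
  case/orP => [/bigcupP[i]|/andP[] //]; rewrite inE => BiX; exact: (subsetP BiX).
case/setUP: (subsetP XP x xX) => [/bigcupP[i BiX xi]|].
  by apply/orP; left; apply/bigcupP; exists i; rewrite ?inE.
case/bigcupP => i _ xi; case: (boolP (B i \subset X)) => BiX.
  by apply/orP; left; apply/bigcupP; exists i; rewrite ?inE ?mem_T_block.
by rewrite xX /=; apply/orP; right; apply/bigcupP; exists i; rewrite ?inE.
Qed.

(* The free part of I consists of m - |I| disjoint sets T_i of size s. *)
Lemma card_free_part (I : {set 'I_m}) : #|free_part I| = (m - #|I|) * s.
Proof.
rewrite card_bigcup_disjoint; last first.
  by move=> i j ij; apply: disjointWl (hTsub i) (disjointWr (hTsub j) (hBdisj ij)).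
by rewrite (eq_bigr (fun=> s)) // sum_nat_const (cardsCs (~: I)) setCK card_ord.
Qed.

(* The admissible sets whose blocks are exactly I ≠ ∅ are in bijection with
   the subsets of the free part of I. *)
Lemma card_admissible_blocks (I : {set 'I_m}) : I != set0 ->
  #|[set X | admissible X && (blocks_of X == I)]| = 2 ^ ((m - #|I|) * s).
Proof.
move=> I0.
have -> : [set X | admissible X && (blocks_of X == I)] =
          [set blocks_union I :|: S | S in powerset (free_part I)].
  apply/setP => X; rewrite inE; apply/andP/imsetP.
  - case=> XP /eqP XI; exists (X :&: free_part I).
      by rewrite powersetE subsetIr.
    by rewrite -XI; apply: admissible_decompose.
  - case=> S; rewrite powersetE => SF ->.
    by rewrite admissible_extend // blocks_of_extend.
rewrite card_in_imset ?card_powerset ?card_free_part //.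
move=> S1 S2; rewrite !powersetE => S1F S2F.
have free_of (S : {set 'I_(k * m)}) :
    S \subset free_part I -> (blocks_union I :|: S) :&: free_part I = S.
  move=> SF; rewrite setIUl (setIidPl SF).
  by rewrite (disjoint_setI0 (blocks_free_disjoint I)) set0U.
by move=> eqS; rewrite -(free_of _ S1F) -(free_of _ S2F) eqS.
Qed.

(* Second assertion: N_j = 'C(m, j) 2^((m-j)s), by grouping the members of F
   according to their set of blocks. *)
Lemma card_members_with_blocks (j : nat) : 1 <= j <= m ->
  #|[set X in uc_generated gens | #|blocks_of X| == j]| =
  'C(m, j) * 2 ^ ((m - j) * s).
Proof.
case/andP => j_gt0 _; rewrite uc_generatedE -sum1_card.
rewrite (partition_big blocks_of (fun I : {set 'I_m} => #|I| == j)); last first.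
  by move=> X; rewrite !inE => /andP[].
rewrite (eq_bigr (fun=> 2 ^ ((m - j) * s))) => [|I /eqP cardI]; last first.
  have I0 : I != set0 by rewrite -card_gt0 cardI.
  rewrite -[in RHS]cardI -card_admissible_blocks // -sum1_card.
  apply: eq_bigl => X; rewrite !inE.
  by case: (blocks_of X =P I) => [->|]; rewrite ?cardI ?eqxx ?andbT ?andbF.
rewrite sum_nat_const; congr (_ * _).
by rewrite -[m in 'C(m, _)]card_ord -card_draws; apply: eq_card => I; rewrite inE.
Qed.

(* Every member has between 1 and m blocks, hence |F| = Σ_{j=1}^m N_j. *)
Lemma card_uc_generated :
  #|uc_generated gens| = \sum_(j < m) 'C(m, j.+1) * 2 ^ ((m - j.+1) * s).
Proof.
have blocks_lt X : #|blocks_of X| < m.+1.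
  by rewrite ltnS -[m in _ <= m]card_ord max_card.
rewrite -sum1_card (partition_big (fun X => inord #|blocks_of X| : 'I_m.+1) xpredT) //.
rewrite big_ord_recl /= big1 => [|X /andP[XF /eqP /(congr1 val)]]; last first.
  rewrite /= inordK // => no_blocks; have [i BiX] := member_contains_block XF.
  suff: 0 < #|blocks_of X| by rewrite no_blocks.
  by apply/card_gt0P; exists i; rewrite inE.
rewrite add0n; apply: eq_bigr => j _.
rewrite -card_members_with_blocks ?ltn_ord // -sum1_card; apply: eq_bigl => X.
by rewrite !inE -val_eqE /= inordK.
Qed.

End BlockFamily.

Lemma sum_closed_form (m s : nat) :
  ((\sum_(j < m) 'C(m, j.+1) * 2 ^ ((m - j.+1) * s))%:R : rat) =
  (2 ^+ ((m - 1) * s) * \sum_(1 <= j < m.+1) 'C(m, j)%:R * 2 ^- ((j - 1) * s))%R.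
Proof.
rewrite natr_sum big_add1 /= big_mkord mulr_sumr; apply: eq_bigr => j _.
rewrite natrM natrX subSS subn0.
have -> : ((m - 1) * s = (m - j.+1) * s + j * s)%N.
  by rewrite -mulnDl; congr (_ * _)%N; have := ltn_ord j; lia.
have pow_neq0 : (2 ^+ (j * s) : rat) != 0%R by rewrite expf_neq0 // pnatr_eq0.
by rewrite exprD; field.
Qed.

Theorem mainTheorem2 (k m s : nat) (hk : 0 < k) (hm : 2 <= m) (hs0 : 0 < s)
    (hs : s <= k - 2)
    (B : 'I_m -> {set 'I_(k * m)})
    (hBcard : forall i, #|B i| = k)
    (hBdisj : forall i j, i != j -> [disjoint B i & B j])
    (hBcover : \bigcup_(i < m) B i = [set: 'I_(k * m)])
    (T : 'I_m -> {set 'I_(k * m)})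
    (hTsub : forall i, T i \subset B i)
    (hTcard : forall i, #|T i| = s) :
  let Tall := \bigcup_(i < m) T i in
  let F := uc_generated [set B i :|: [set t] | i in [set: 'I_m], t in Tall] in
  (forall X, X \in F -> exists i, B i \subset X) /\
  (forall j, 1 <= j <= m ->
     #|[set X in F | #|[set i | B i \subset X]| == j]| = 'C(m, j) * 2 ^ ((m - j) * s)) /\
  (#|F|%:R : rat) = (2 ^+ ((m - 1) * s) *
     \sum_(1 <= j < m.+1) 'C(m, j)%:R * 2 ^- ((j - 1) * s))%R.
Proof.
move=> Tall F; have hsk : s < k by lia.
split=> [X|]; first apply: (member_contains_block hBcard hTsub hTcard hs0 hsk).
split; first apply: (card_members_with_blocks hBcard hBdisj hTsub hTcard hs0 hsk).
by rewrite (card_uc_generated hBcard hBdisj hTsub hTcard hs0 hsk) sum_closed_form.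
Qed.
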